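(* Let $(\alpha,\beta)\in Q$. Then the GAFS sequence satisfies, for all $k\ge0$: (1) $Ax_{k+1}=b$; (2) $x_{k+1}>0$; (3) $c^Tx_{k+1}<c^Tx_k$.
   Context: Let $A\in\mathbb{R}^{m\times n}$ have rank $m$, $b\in\mathbb{R}^m$, $c\in\mathbb{R}^n$. Primal LP: $\min c^Tx$ s.t. $Ax=b$, $x\ge 0$; dual LP: $\max b^Ty$ s.t. $A^Ty+s=c$, $s\ge 0$. Standing assumptions: the primal has a strictly positive feasible point; $c^Tx$ is not constant on the primal feasible region; the LP has an optimal solution. For $u\in\mathbb{R}^n$, $\gamma(u)=\max\{u_i: u_i>0\}$; $\|\cdot\|$ is the Euclidean norm. For $x>0$, $X=\mathrm{diag}(x)$. GAFS sequence: fix $\alpha\in(0,1)$, $\beta\in[0,1)$, and $x_0>0$ with $Ax_0=b$. For $k\ge0$ let $X_k=\mathrm{diag}(x_k)$, $y_k=(AX_k^2A^T)^{-1}AX_k^2c$, $s_k=c-A^Ty_k$. Set $x_1=x_0-\alpha\frac{X_0^2s_0}{\gamma(X_0s_0)}$ and, for $k\ge1$, $x_{k+1}=x_k-\alpha\frac{X_k^2s_k}{\gamma(X_ks_k)}+\beta\frac{x_k-x_{k-1}}{\|X_k^{-1}(x_k-x_{k-1})\|_\infty}$ (it is assumed all quantities are well defined). $Q=\{(\alpha,\beta): 0<\alpha<1,\ 0\le\beta<1/\phi,\ \alpha+\beta\le 2/3\}$ with $\phi=(1+\sqrt5)/2$. *)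

From HB Require Import structures.
From mathcomp Require Import all_boot all_order all_algebra.
Set Implicit Arguments. Unset Strict Implicit. Unset Printing Implicit Defensive.
Import Order.TTheory GRing.Theory Num.Theory.
Local Open Scope ring_scope.

Section GAFS.
Variables (R : rcfType) (m n : nat).
Implicit Types (x u : 'cV[R]_n).

Definition Xdiag x : 'M[R]_n := diag_mx x^T.
Definition Xinv x : 'M[R]_n := diag_mx (map_mx (fun t => t^-1) x^T).

(* gamma(u) = max { u_i : u_i > 0 } (0 if the set is empty; only used when it is not) *)
Definition gammaP u : R := \big[Num.max/0]_(i | 0 < u i 0) u i 0.
Definition infnorm u : R := \big[Num.max/0]_i `|u i 0|.
Definition dotv (v w : 'cV[R]_n) : R := (v^T *m w) 0 0.

Variables (A : 'M[R]_(m, n)) (b : 'cV[R]_m) (c : 'cV[R]_n).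

Definition yk x : 'cV[R]_m :=
  invmx (A *m (Xdiag x ^+ 2) *m A^T) *m (A *m (Xdiag x ^+ 2) *m c).
Definition sk x : 'cV[R]_n := c - A^T *m yk x.

Definition as_step (alpha : R) x : 'cV[R]_n :=
  x - (alpha / gammaP (Xdiag x *m sk x)) *: (Xdiag x ^+ 2 *m sk x).

(* full step with momentum: x_{k+1} from x_{k-1} = xp and x_k = x *)
Definition mom_step (alpha beta : R) (xp x : 'cV[R]_n) : 'cV[R]_n :=
  as_step alpha x + (beta / infnorm (Xinv x *m (x - xp))) *: (x - xp).

(* gafs_pair k = (x_k, x_{k+1}) *)
Fixpoint gafs_pair (alpha beta : R) (x0 : 'cV[R]_n) (k : nat) : 'cV[R]_n * 'cV[R]_n :=
  match k with
  | O => (x0, as_step alpha x0)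
  | S k' => let p := gafs_pair alpha beta x0 k' in (p.2, mom_step alpha beta p.1 p.2)
  end.

Definition gafs (alpha beta : R) (x0 : 'cV[R]_n) (k : nat) : 'cV[R]_n :=
  (gafs_pair alpha beta x0 k).1.

Definition primal_feasible x : Prop := A *m x = b /\ forall i, 0 <= x i 0.

(* "all quantities are well defined" along the sequence *)
Definition gafs_well_defined (alpha beta : R) (x0 : 'cV[R]_n) : Prop :=
  forall k : nat,
    let xk := gafs alpha beta x0 k in
    (A *m (Xdiag xk ^+ 2) *m A^T \in unitmx)
    /\ (exists i, 0 < (Xdiag xk *m sk xk) i 0)
    /\ (forall i, xk i 0 != 0)
    /\ ((0 < k)%N -> infnorm (Xinv xk *m (xk - gafs alpha beta x0 k.-1)) != 0).

End GAFS.

Definition phi (R : rcfType) : R := (1 + Num.sqrt 5) / 2.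

Definition inQ (R : rcfType) (alpha beta : R) : Prop :=
  0 < alpha /\ alpha < 1 /\ 0 <= beta /\ beta < (phi R)^-1 /\ alpha + beta <= 2 / 3.

(** The affine-scaling direction [d = X^2 s] lies in the kernel of [A] and
    satisfies [c^T d = |X s|^2 > 0], so every step keeps [A x = b] and
    decreases [c^T x] by a positive multiple of [|X s|^2]; the momentum term
    [x_k - x_{k-1}] lies in the kernel of [A] as well and, by the previous
    decrease, does not increase [c^T x].  Normalising by [gamma(X s)] and by
    [|X^{-1}(x_k - x_{k-1})|_oo] makes the two corrections move each
    coordinate [x_i] by at most [alpha x_i] and [beta x_i] respectively, so
    positivity is kept as soon as [alpha + beta < 1]. *)
From HB Require Import structures.
From mathcomp Require Import all_boot all_order all_algebra.
From mathcomp Require Import ring lra.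
Set Implicit Arguments. Unset Strict Implicit. Unset Printing Implicit Defensive.
Import Order.TTheory GRing.Theory Num.Theory.
Local Open Scope ring_scope.

Section Scaling.
Variables (R : rcfType) (n : nat).
Implicit Types (x v w : 'cV[R]_n).

Lemma Xdiag_mulmxE x v i : (Xdiag x *m v) i 0 = x i 0 * v i 0.
Proof. by rewrite /Xdiag mul_diag_mx !mxE. Qed.

Lemma Xinv_mulmxE x v i : (Xinv x *m v) i 0 = (x i 0)^-1 * v i 0.
Proof. by rewrite /Xinv mul_diag_mx !mxE. Qed.

Lemma Xdiag2_mulmx x v : Xdiag x ^+ 2 *m v = Xdiag x *m (Xdiag x *m v).
Proof. by rewrite expr2 -mulmxE mulmxA. Qed.

Lemma dotvE v w : dotv v w = \sum_i v i 0 * w i 0.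
Proof. by rewrite /dotv mxE; apply: eq_bigr => i _; rewrite mxE. Qed.

Lemma dotvB v w1 w2 : dotv v (w1 - w2) = dotv v w1 - dotv v w2.
Proof. by rewrite /dotv mulmxBr [LHS]mxE [X in _ + X]mxE. Qed.

Lemma dotvD v w1 w2 : dotv v (w1 + w2) = dotv v w1 + dotv v w2.
Proof. by rewrite /dotv mulmxDr [LHS]mxE. Qed.

Lemma dotvZ v a w : dotv v (a *: w) = a * dotv v w.
Proof. by rewrite /dotv -scalemxAr [LHS]mxE. Qed.

Lemma dotv_Xdiag2 x v : dotv v (Xdiag x ^+ 2 *m v) = \sum_i (Xdiag x *m v) i 0 ^+ 2.
Proof.
rewrite dotvE; apply: eq_bigr => i _.
by rewrite Xdiag2_mulmx !Xdiag_mulmxE; ring.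
Qed.

Lemma sum_sqr_gt0 w j : w j 0 != 0 -> 0 < \sum_i w i 0 ^+ 2.
Proof.
move=> wj; rewrite (bigD1 j) //= ltr_pwDl ?exprn_even_gt0 //.
by apply: sumr_ge0 => i _; exact: sqr_ge0.
Qed.

Lemma gammaP_ge w i : (exists j, 0 < w j 0) -> w i 0 <= gammaP w.
Proof.
case=> j wj; rewrite /gammaP.
have le_max k : 0 < w k 0 -> w k 0 <= \big[Num.max/0]_(i | 0 < w i 0) w i 0.
  exact: (@le_bigmax_cond _ R _ 0 k (fun i => 0 < w i 0) (fun i => w i 0)).
have [wi|wi] := ltP 0 (w i 0); first exact: le_max.
exact: le_trans wi (le_trans (ltW wj) (le_max j wj)).
Qed.

Lemma gammaP_gt0 w : (exists j, 0 < w j 0) -> 0 < gammaP w.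
Proof. by move=> wpos; case: (wpos) => j wj; exact: lt_le_trans wj (gammaP_ge j wpos). Qed.

Lemma infnorm_ge w i : `|w i 0| <= infnorm w.
Proof. exact: (@le_bigmax _ R _ 0 (fun i => `|w i 0|) i). Qed.

Lemma infnorm_ge0 w : 0 <= infnorm w.
Proof. exact: bigmax_ge_id. Qed.

End Scaling.

Section Steps.
Variables (R : rcfType) (m n : nat) (A : 'M[R]_(m, n)) (c : 'cV[R]_n).
Variables (alpha beta : R) (xp x : 'cV[R]_n).
Hypotheses (AX2At_unit : A *m (Xdiag x ^+ 2) *m A^T \in unitmx)
  (Xs_pos : exists i, 0 < (Xdiag x *m sk A c x) i 0) (x_gt0 : forall i, 0 < x i 0).

Local Notation s := (sk A c x).
Local Notation w := (Xdiag x *m sk A c x).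

Lemma mulmx_Xdiag2_sk : A *m (Xdiag x ^+ 2 *m s) = 0.
Proof.
rewrite /sk /yk mulmxBr mulmxBr.
set M := A *m Xdiag x ^+ 2 *m A^T.
have -> : A *m (Xdiag x ^+ 2 *m (A^T *m (invmx M *m (A *m Xdiag x ^+ 2 *m c))))
        = M *m (invmx M *m (A *m Xdiag x ^+ 2 *m c)) by rewrite !mulmxA.
by rewrite mulKVmx // mulmxA subrr.
Qed.

(* [y^T A X^2 s = 0] removes the [A^T y] part of [c = s + A^T y]. *)
Lemma dotv_Xdiag2_sk : dotv c (Xdiag x ^+ 2 *m s) = \sum_i w i 0 ^+ 2.
Proof.
rewrite -dotv_Xdiag2 -{1}(subrK (A^T *m yk A c x) c) -/s.
rewrite /dotv linearD /= mulmxDl trmx_mul trmxK -(mulmxA (yk A c x)^T A).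
by rewrite mulmx_Xdiag2_sk mulmx0 addr0.
Qed.

Lemma mulmx_as_step : A *m as_step A c alpha x = A *m x.
Proof. by rewrite /as_step mulmxBr -scalemxAr mulmx_Xdiag2_sk scaler0 subr0. Qed.

Lemma as_step_ge i : 0 <= alpha -> (1 - alpha) * x i 0 <= as_step A c alpha x i 0.
Proof.
move=> alpha_ge0; rewrite /as_step 3!mxE Xdiag2_mulmx Xdiag_mulmxE.
have gamma_gt0 := gammaP_gt0 Xs_pos.
have ratio_le1 : w i 0 / gammaP w <= 1.
  by rewrite ler_pdivrMr // mul1r; exact: gammaP_ge.
have := ler_wpM2l (mulr_ge0 alpha_ge0 (ltW (x_gt0 i))) ratio_le1.
have -> : alpha / gammaP w * (x i 0 * w i 0) = alpha * x i 0 * (w i 0 / gammaP w)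
  by ring.
lra.
Qed.

Lemma dotv_as_step_lt : 0 < alpha -> dotv c (as_step A c alpha x) < dotv c x.
Proof.
move=> alpha_gt0; rewrite /as_step dotvB dotvZ dotv_Xdiag2_sk.
have [j wj] := Xs_pos.
have decrease_gt0 : 0 < alpha / gammaP w * \sum_i w i 0 ^+ 2.
  by rewrite !mulr_gt0 ?invr_gt0 ?gammaP_gt0 ?(sum_sqr_gt0 (lt0r_neq0 wj)).
lra.
Qed.

Lemma mulmx_mom_step : A *m xp = A *m x -> A *m mom_step A c alpha beta xp x = A *m x.
Proof.
move=> Axp; rewrite /mom_step mulmxDr mulmx_as_step -scalemxAr.
by rewrite [A *m (x - xp)]mulmxBr Axp subrr scaler0 addr0.
Qed.

(* [N = |X^{-1}(x - xp)|_oo] bounds [(xp - x)_i / x_i], so the momentum term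
   lowers [x_i] by at most [beta x_i]. *)
Lemma mom_step_ge i : 0 <= alpha -> 0 <= beta ->
    infnorm (Xinv x *m (x - xp)) != 0 ->
  (1 - alpha - beta) * x i 0 <= mom_step A c alpha beta xp x i 0.
Proof.
move=> alpha_ge0 beta_ge0 N_neq0; rewrite /mom_step mxE [X in _ <= _ + X]mxE.
have as_ge := as_step_ge i alpha_ge0.
set N := infnorm _ in N_neq0 *.
have N_gt0 : 0 < N by rewrite lt0r N_neq0 infnorm_ge0.
have := infnorm_ge (Xinv x *m (x - xp)) i; rewrite Xinv_mulmxE -/N.
set q := (x i 0)^-1 * _ => q_le.
have xi_gt0 := x_gt0 i.
have diffE : (x - xp) i 0 = x i 0 * q by rewrite /q mulrA mulfV ?mul1r // gt_eqF.
have ratio_ge : -1 <= q / N.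
  by rewrite ler_pdivlMr //; move: q_le; rewrite ler_norml => /andP[? _]; lra.
have := ler_wpM2l (mulr_ge0 beta_ge0 (ltW xi_gt0)) ratio_ge.
have -> : beta / N * (x - xp) i 0 = beta * x i 0 * (q / N) by rewrite diffE; ring.
lra.
Qed.

Lemma dotv_mom_step_lt : 0 < alpha -> 0 <= beta -> dotv c x < dotv c xp ->
  dotv c (mom_step A c alpha beta xp x) < dotv c x.
Proof.
move=> alpha_gt0 beta_ge0 descent; rewrite /mom_step dotvD dotvZ dotvB.
have := dotv_as_step_lt alpha_gt0.
have : 0 <= beta / infnorm (Xinv x *m (x - xp)) by rewrite divr_ge0 ?infnorm_ge0.
set t := beta / _ => t_ge0.
have : t * (dotv c x - dotv c xp) <= 0 by rewrite mulr_ge0_le0 // subr_le0 ltW.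
lra.
Qed.

End Steps.

Section Sequence.
Variables (R : rcfType) (m n : nat) (A : 'M[R]_(m, n)) (b : 'cV[R]_m) (c : 'cV[R]_n).
Variables (alpha beta : R) (x0 : 'cV[R]_n).
Hypotheses (alpha_gt0 : 0 < alpha) (beta_ge0 : 0 <= beta) (alpha_beta_lt1 : alpha + beta < 1).
Hypotheses (x0_gt0 : forall i, 0 < x0 i 0) (Ax0 : A *m x0 = b).
Hypothesis (wd : gafs_well_defined A c alpha beta x0).

Local Notation x := (gafs A c alpha beta x0).

Lemma gafs1 : x 1 = as_step A c alpha x0. Proof. by []. Qed.

Lemma gafsSS k : x k.+2 = mom_step A c alpha beta (x k) (x k.+1). Proof. by []. Qed.

Lemma gafs_feasible k : A *m x k = b.
Proof.
suff feas2 j : A *m x j = b /\ A *m x j.+1 = b by case: (feas2 k).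
elim: j => [|j [Axj AxSj]].
  by have [unit0 _] := wd 0; rewrite gafs1 mulmx_as_step.
by have [unitSj _] := wd j.+1; rewrite gafsSS mulmx_mom_step ?Axj.
Qed.

Lemma gafs_gt0 k i : 0 < x k i 0.
Proof.
move: (beta_ge0) (alpha_beta_lt1) => b_ge0 ab_lt1.
elim: k i => [//|[|k] IHk] i.
  have [_ [Xs_pos _]] := wd 0.
  have := as_step_ge Xs_pos x0_gt0 i (ltW alpha_gt0).
  have : 0 < (1 - alpha) * x0 i 0 by apply: mulr_gt0; [lra | exact: x0_gt0].
  rewrite gafs1; lra.
have [_ [Xs_pos [_ N_neq0]]] := wd k.+1.
have := mom_step_ge (xp := x k) Xs_pos IHk i (ltW alpha_gt0) beta_ge0 (N_neq0 isT).
have : 0 < (1 - alpha - beta) * x k.+1 i 0 by apply: mulr_gt0; [lra | exact: IHk].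
rewrite gafsSS; lra.
Qed.

Lemma gafs_decreasing k : dotv c (x k.+1) < dotv c (x k).
Proof.
elim: k => [|k IHk].
  by have [unit0 [Xs0_pos _]] := wd 0; rewrite gafs1 dotv_as_step_lt.
by have [unitSk [XsSk_pos _]] := wd k.+1; rewrite gafsSS dotv_mom_step_lt.
Qed.

End Sequence.

Theorem theorem2 (R : rcfType) (m n : nat)
  (A : 'M[R]_(m, n)) (b : 'cV[R]_m) (c : 'cV[R]_n)
  (alpha beta : R) (x0 : 'cV[R]_n) :
  \rank A = m ->
  (exists xs : 'cV[R]_n, A *m xs = b /\ forall i, 0 < xs i 0) ->
  (exists x1 x2 : 'cV[R]_n, primal_feasible A b x1 /\ primal_feasible A b x2 /\
       dotv c x1 != dotv c x2) ->
  (exists xo : 'cV[R]_n, primal_feasible A b xo /\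
       forall x, primal_feasible A b x -> dotv c xo <= dotv c x) ->
  inQ alpha beta ->
  (forall i, 0 < x0 i 0) -> A *m x0 = b ->
  gafs_well_defined A c alpha beta x0 ->
  forall k : nat,
    A *m gafs A c alpha beta x0 k.+1 = b /\
    (forall i, 0 < gafs A c alpha beta x0 k.+1 i 0) /\
    dotv c (gafs A c alpha beta x0 k.+1) < dotv c (gafs A c alpha beta x0 k).
Proof.
move=> _ _ _ _ [alpha_gt0 [_ [beta_ge0 [_ alpha_beta_le]]]] x0_gt0 Ax0 wd k.
have alpha_beta_lt1 : alpha + beta < 1 by lra.
split; first exact: gafs_feasible.
split; first exact: gafs_gt0.
exact: gafs_decreasing.
Qed.
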